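(* Let $\eta$ be a denoiser family obeying the scaling relation, $\tau\in\Theta$, and $\nu=\{\nu_N\}$ a sequence such that for every $\sigma>0$ the limit $\lim_{N\to\infty}\frac1N\mathbb E_{\nu_N}\|\mathbf X-\eta(\mathbf X+\sigma\mathbf Z;\tau,\sigma)\|_2^2$ exists. Then $$\delta_{SE}(\tau,\nu\mid\eta)=M(\tau,\nu\mid\eta)$$ (both sides possibly $+\infty$).
   Context: A denoiser family is a collection of maps $\eta(\cdot;\tau,\sigma):\mathbb R^N\to\mathbb R^N$ ($N\ge1$, $\tau\in\Theta$, $\sigma>0$) satisfying the scaling relation $\eta(y;\tau,\sigma)=\sigma\,\eta(y/\sigma;\tau,1)$. For $\nu=\{\nu_N\}$, $\nu_N\in\mathcal P(\mathbb R^N)$, $\delta>0$, $m>0$, the state evolution map is $$\Psi(m;\delta,\tau,\nu)=\lim_{N\to\infty}\frac1N\mathbb E_{\nu_N}\Big\|\mathbf X-\eta\Big(\mathbf X+\sqrt{m/\delta}\,\mathbf Z;\tau,\sqrt{m/\delta}\Big)\Big\|_2^2,$$ with $\mathbf X\sim\nu_N$ independent of $\mathbf Z\sim\mathsf N(0,I_{N\times N})$. The highest fixed point is $\mathrm{HFP}(\delta,\tau,\nu)=\sup\big(\{0\}\cup\{m>0:\Psi(m;\delta,\tau,\nu)\ge m\}\big)$. Define $\delta_{SE}(\tau,\nu\mid\eta)=\inf\{\delta>0:\mathrm{HFP}(\delta,\tau,\nu)=0\}$ (with $\inf\emptyset=+\infty$) and $$M(\tau,\nu\mid\eta)=\sup_{\sigma>0}\lim_{N\to\infty}\frac{1}{N\sigma^2}\mathbb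 E_{\nu_N}\|\mathbf X-\eta(\mathbf X+\sigma\mathbf Z;\tau,\sigma)\|_2^2.$$ *)

From HB Require Import structures.
From mathcomp Require Import all_boot all_order all_algebra.
From mathcomp Require Import all_classical all_reals all_analysis.
Set Implicit Arguments. Unset Strict Implicit. Unset Printing Implicit Defensive.
Import Order.TTheory GRing.Theory Num.Theory.
Import numFieldNormedType.Exports.
Local Open Scope classical_set_scope.
Local Open Scope ring_scope.

(** R^N is modelled as [N.-tuple R], which carries the library's product
    (coordinate) sigma-algebra, i.e. the Borel sigma-algebra of R^N. *)

Section Defs.
Context {R : realType}.

Definition tadd N (x y : N.-tuple R) : N.-tuple R :=
  [tuple tnth x i + tnth y i | i < N].
Definition tsub N (x y : N.-tuple R) : N.-tuple R :=
  [tuple tnth x i - tnth y i | i < N].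
Definition tscale N (a : R) (x : N.-tuple R) : N.-tuple R :=
  [tuple a * tnth x i | i < N].
Definition sqnorm N (x : N.-tuple R) : R := \sum_(i < N) tnth x i ^+ 2.

(** Expectation E_Z[f Z] for Z ~ N(0, I_{N x N}), computed as the iterated
    integral against N independent standard normal coordinates. *)
Fixpoint gauss_expect (N : nat) : (N.-tuple R -> \bar R) -> \bar R :=
  match N with
  | 0 => fun f => f [tuple]
  | N'.+1 => fun f =>
      (\int[normal_prob (0:R) 1]_z gauss_expect (fun w => f (cons_tuple z w)))%E
  end.

Definition denoiser (Theta : Type) := forall N : nat, Theta -> R -> N.-tuple R -> N.-tuple R.

Definition scaling_relation (Theta : Type) (eta : denoiser Theta) : Prop :=
  forall N tau sigma (y : N.-tuple R), 0 < sigma ->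
    eta N tau sigma y = tscale sigma (eta N tau 1 (tscale sigma^-1 y)).

Definition laws := forall N : nat, probability (N.-tuple R) R.

Section SE.
Context (Theta : Type) (eta : denoiser Theta) (nu : laws) (tau : Theta).

(** E_{nu_N} ||X - eta(X + sigma Z; tau, sigma)||_2^2, X ~ nu_N indep. of
    Z ~ N(0, I_N) (iterated integral, Tonelli). *)
Definition risk (N : nat) (sigma : R) : \bar R :=
  (\int[nu N]_x gauss_expect
      (fun z => (sqnorm (tsub x (eta tau sigma (tadd x (tscale sigma z)))))%:E))%E.

Definition Psi (m delta : R) : \bar R :=
  lim ((fun N : nat => ((N%:R)^-1)%:E * risk N (Num.sqrt (m / delta)))%E @ \oo).

Definition HFP (delta : R) : \bar R :=
  ereal_sup ([set 0%E] `|` [set m%:E | m in [set m : R | 0 < m /\ (m%:E <= Psi m delta)%E]]).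

(** delta_SE(tau, nu | eta) ; ereal_inf of the empty set is +oo *)
Definition delta_SE : \bar R :=
  ereal_inf [set d%:E | d in [set d : R | 0 < d /\ HFP d = 0%E]].

Definition M_SE : \bar R :=
  ereal_sup [set lim ((fun N : nat => ((N%:R * sigma ^+ 2)^-1)%:E * risk N sigma)%E @ \oo)
            | sigma in [set s : R | 0 < s]].
End SE.
End Defs.

From mathcomp Require Import all_boot all_order all_algebra.
From mathcomp Require Import all_classical all_reals all_analysis.
From mathcomp Require Import lra.
Set Implicit Arguments. Unset Strict Implicit. Unset Printing Implicit Defensive.
Import Order.TTheory GRing.Theory Num.Theory.
Local Open Scope classical_set_scope.
Local Open Scope ring_scope.

(** Write [mse s] for the limiting normalized risk at noise level [s]. Since
    [Psi m delta = mse (sqrt (m / delta))], substituting [m = delta s^2] shows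
    that [HFP delta = 0] exactly when [mse s < delta s^2] for every [s > 0],
    i.e. when [delta] is a strict upper bound of the ratios [mse s / s^2].
    The infimum of the positive strict upper bounds of a nonempty set of
    nonnegative reals is its supremum, and the supremum of these ratios is
    [M] by definition. *)

Lemma ereal_inf_strict_ubounds (R : realType) (T : Type) (D : set T)
    (f : T -> R) :
  D !=set0 -> (forall t, D t -> 0 <= f t) ->
  ereal_inf [set d%:E | d in [set d : R | 0 < d /\ forall t, D t -> f t < d]]
  = ereal_sup [set (f t)%:E | t in D].
Proof.
move=> [t0 Dt0] f_ge0; apply/eqP; rewrite eq_le; apply/andP; split; last first.
  apply: le_ereal_inf_tmp => _ [d [_ fltd] <-].
  by apply: ge_ereal_sup => _ [t Dt <-]; rewrite lee_fin ltW ?fltd.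
have sup_ge0 : (0 <= ereal_sup [set (f t)%:E | t in D])%E.
  apply: (@le_trans _ _ (f t0)%:E); first by rewrite lee_fin f_ge0.
  by apply: ereal_sup_ubound; exists t0.
case E: (ereal_sup _) sup_ge0 => [r| |] // r_ge0; last by rewrite leey.
apply/lee_addgt0Pr => e e_gt0; apply: ereal_inf_lbound; exists (r + e) => //.
split; first by rewrite lee_fin in r_ge0; lra.
move=> t Dt; have : ((f t)%:E <= r%:E)%E by rewrite -E; apply: ereal_sup_ubound; exists t.
by rewrite lee_fin; lra.
Qed.

Lemma gauss_expect_ge0 (R : realType) N (f : N.-tuple R -> \bar R) :
  (forall x, (0 <= f x)%E) -> (0 <= gauss_expect f)%E.
Proof.
elim: N f => [|N IH] f f_ge0 /=; first exact: f_ge0.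
by apply: integral_ge0 => z _; apply: IH.
Qed.

Lemma risk_ge0 (R : realType) (Theta : Type) (eta : @denoiser R Theta)
  (nu : @laws R) (tau : Theta) N s : (0 <= risk eta nu tau N s)%E.
Proof.
apply: integral_ge0 => x _; apply: gauss_expect_ge0 => z.
by rewrite lee_fin; apply: sumr_ge0 => i _; exact: sqr_ge0.
Qed.

Lemma HFP_eq0P (R : realType) (Theta : Type) (eta : @denoiser R Theta)
  (nu : @laws R) (tau : Theta) (delta : R) :
  HFP eta nu tau delta = 0%E <->
  forall m : R, 0 < m -> (Psi eta nu tau m delta < m%:E)%E.
Proof.
split=> [HFP0 m m_gt0 | Psi_lt].
  rewrite ltNge; apply/negP => m_le.
  have : (m%:E <= HFP eta nu tau delta)%E by apply: ereal_sup_ubound; right; exists m.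
  by rewrite HFP0 lee_fin leNgt m_gt0.
apply/eqP; rewrite eq_le; apply/andP; split; last by apply: ereal_sup_ubound; left.
apply: ge_ereal_sup => _ [-> // | [m [m_gt0 m_le] <-]].
by have := lt_le_trans (Psi_lt m m_gt0) m_le; rewrite ltxx.
Qed.

Section LimitingRisk.
Context (R : realType) (Theta : Type) (eta : @denoiser R Theta) (nu : @laws R)
  (tau : Theta).
Hypothesis risk_cvg : forall sigma : R, 0 < sigma ->
  exists l : R, (fun N : nat => ((N%:R)^-1)%:E * risk eta nu tau N sigma)%E
    @ \oo --> l%:E.

Definition mse (sigma : R) : R :=
  fine (lim ((fun N : nat => ((N%:R)^-1)%:E * risk eta nu tau N sigma)%E @ \oo)).

Lemma mse_cvg sigma : 0 < sigma ->
  (fun N : nat => ((N%:R)^-1)%:E * risk eta nu tau N sigma)%E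
    @ \oo --> (mse sigma)%:E.
Proof. by move=> /risk_cvg[l l_cvg]; rewrite /mse (cvg_lim _ l_cvg). Qed.

Lemma mse_ge0 sigma : 0 < sigma -> 0 <= mse sigma.
Proof.
move=> /mse_cvg mse_cvg; rewrite -lee_fin; apply: (cvge_to_ge mse_cvg).
apply: nearW => N; apply: mule_ge0; last exact: risk_ge0.
by rewrite lee_fin invr_ge0 ler0n.
Qed.

Lemma Psi_mse m delta : 0 < m -> 0 < delta ->
  Psi eta nu tau m delta = (mse (Num.sqrt (m / delta)))%:E.
Proof.
move=> m_gt0 delta_gt0; apply: cvg_lim => //.
by apply: mse_cvg; rewrite sqrtr_gt0 divr_gt0.
Qed.

Lemma scaled_risk_lim sigma : 0 < sigma ->
  lim ((fun N : nat => ((N%:R * sigma ^+ 2)^-1)%:E * risk eta nu tau N sigma)%E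
    @ \oo) = (mse sigma / sigma ^+ 2)%:E.
Proof.
move=> sigma_gt0; apply: cvg_lim => //.
have -> : (fun N : nat => ((N%:R * sigma ^+ 2)^-1)%:E * risk eta nu tau N sigma)%E
  = (fun N => ((sigma ^+ 2)^-1)%:E * (((N%:R)^-1)%:E * risk eta nu tau N sigma))%E.
  by apply: funext => N; rewrite invfM EFinM muleA [X in (X * _)%E]muleC.
by rewrite mulrC EFinM; apply: cvgeZl => //; apply: mse_cvg.
Qed.

Lemma HFP_eq0_mse delta : 0 < delta ->
  HFP eta nu tau delta = 0%E <->
  forall sigma, 0 < sigma -> mse sigma / sigma ^+ 2 < delta.
Proof.
move=> delta_gt0; rewrite HFP_eq0P; split=> [Psi_lt sigma sigma_gt0 | mse_lt m m_gt0].
  have s2_gt0 : 0 < sigma ^+ 2 by rewrite exprn_gt0.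
  have := Psi_lt _ (mulr_gt0 delta_gt0 s2_gt0).
  rewrite Psi_mse ?mulr_gt0 // mulrAC divff ?gt_eqF // mul1r sqrtr_sqr.
  by rewrite ger0_norm ?ltW // lte_fin ltr_pdivrMr // mulrC.
set sigma := Num.sqrt (m / delta).
have sigma_gt0 : 0 < sigma by rewrite sqrtr_gt0 divr_gt0.
have s2E : sigma ^+ 2 = m / delta by rewrite sqr_sqrtr // ltW ?divr_gt0.
have := mse_lt _ sigma_gt0.
by rewrite Psi_mse // lte_fin s2E ltr_pdivrMr ?divr_gt0 // mulrC mulfVK ?gt_eqF.
Qed.

End LimitingRisk.

Theorem mainTheorem15 (R : realType) (Theta : Type) (eta : @denoiser R Theta)
  (nu : @laws R) (tau : Theta) :
  scaling_relation eta ->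
  (forall sigma : R, 0 < sigma ->
     exists l : R,
       (fun N : nat => ((N%:R)^-1)%:E * risk eta nu tau N sigma)%E
         @ \oo --> l%:E) ->
  delta_SE eta nu tau = M_SE eta nu tau.
Proof.
move=> _ risk_cvg.
have -> : M_SE eta nu tau =
    ereal_sup [set (mse eta nu tau s / s ^+ 2)%:E | s in [set s : R | 0 < s]].
  by rewrite /M_SE (eq_imagel (scaled_risk_lim risk_cvg)).
rewrite -ereal_inf_strict_ubounds; last 2 first.
- by exists 1; rewrite /= ltr01.
- by move=> s s_gt0; rewrite divr_ge0 ?sqr_ge0 ?mse_ge0.
rewrite /delta_SE; congr ereal_inf; congr image.
by apply/seteqP; split=> d [d_gt0 H]; split=> //; apply/(HFP_eq0_mse risk_cvg d_gt0).
Qed.
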